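(* Let $G$ be a finite group with identity $e$ and $H$ a normal subgroup of $G$. Then the extended subgroup sum graph $\Gamma^+_{G,H}$ admits a perfect code if and only if either $H\in\{\{e\},G\}$ or $G^2\subseteq H$, where $G^2=\{g^2:g\in G\}$.
   Context: For a normal subgroup $H$ of a finite group $G$, the extended subgroup sum graph $\Gamma^+_{G,H}$ is the simple undirected graph with vertex set $G$ in which distinct vertices $x,y$ are adjacent if and only if $xy\in H$. A perfect code in a graph is a set $C$ of vertices that is independent and such that every vertex not in $C$ is adjacent to exactly one vertex of $C$. *)

From mathcomp Require Import all_boot all_fingroup.
Set Implicit Arguments. Unset Strict Implicit. Unset Printing Implicit Defensive.
Local Open Scope group_scope.

(* Extended subgroup sum graph Gamma^+_{G,H}: vertex set G (all elements of gT
   lying in G), distinct x y adjacent iff x * y \in H. *)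
Definition ess_adj (gT : finGroupType) (H : {set gT}) (x y : gT) : bool :=
  (x != y) && (x * y \in H).

Definition ess_perfect_code (gT : finGroupType) (G H C : {set gT}) : Prop :=
  [/\ C \subset G,
      {in C &, forall x y, ~~ ess_adj H x y} &
      {in G :\: C, forall x, #|[set c in C | ess_adj H x c]| = 1%N}].

Definition squares (gT : finGroupType) (G : {set gT}) : {set gT} :=
  [set g ^+ 2 | g in G].

From mathcomp Require Import all_boot all_fingroup.
Set Implicit Arguments. Unset Strict Implicit. Unset Printing Implicit Defensive.
Local Open Scope group_scope.

(* For x, y in G we have x * y \in H iff Hx = (Hy)^-1 in G/H.  If G^2 <= H,
   every coset is its own inverse, the graph is a disjoint union of cliques on
   the cosets of H, and a transversal of G/H is a perfect code; if H = 1 the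
   graph is a matching x -- x^-1 and picking one vertex of each pair works.
   Conversely let H <> 1 and x^2 \notin H, so that Hx <> Hx^-1.  No code vertex
   c lies in Hx: otherwise x^-1 is adjacent to all of Hx, so c is the only code
   vertex in Hx, and the code neighbour of c * h (h \in H, h <> 1) lies in
   Hx^-1 and is adjacent to c.  Applying this to x and x^-1, the vertex x has no
   code neighbour at all, although it is not in the code. *)

Section PerfectCode.
Variables (gT : finGroupType) (G H C : {set gT}).
Hypothesis codeC : ess_perfect_code G H C.

Lemma perfect_code_nbr x :
  x \in G -> x \notin C -> exists2 c, c \in C & ess_adj H x c.
Proof.
move=> xG xC; have [_ _ /(_ x)] := codeC; rewrite inE xC xG => /(_ isT) nbr1.
have /card_gt0P[c] : 0 < #|[set c in C | ess_adj H x c]| by rewrite nbr1.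
by rewrite inE => /andP[cC xc]; exists c.
Qed.

Lemma perfect_code_nbr_uniq x c d :
  x \in G -> x \notin C -> c \in C -> d \in C ->
  ess_adj H x c -> ess_adj H x d -> c = d.
Proof.
move=> xG xC cC dC xc xd; have [_ _ /(_ x)] := codeC.
rewrite inE xC xG => /(_ isT) /eqP /cards1P[e nbrE].
have inNbr y : y \in C -> ess_adj H x y -> y = e.
  by move=> yC xy; apply/set1P; rewrite -nbrE inE yC.
by rewrite (inNbr c cC xc) (inNbr d dC xd).
Qed.

End PerfectCode.

Lemma trivial_perfect_code (gT : finGroupType) (G : {group gT}) :
  ess_perfect_code G 1 [set x in G | enum_rank x <= enum_rank x^-1].
Proof.
have adjE (x y : gT) : ess_adj 1 x y = (x != y) && (y == x^-1).
  by rewrite /ess_adj inE -eq_invg_mul (eq_sym x^-1).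
split.
- by apply/subsetP => x; rewrite inE => /andP[].
- move=> x y; rewrite !inE adjE => /andP[_ le_x] /andP[_ le_y].
  apply/negP => /andP[/negP neq_xy /eqP yE]; case: neq_xy.
  move: le_y; rewrite yE invgK => le_xV.
  by apply/eqP/enum_rank_inj/ord_inj/anti_leq; rewrite le_x le_xV.
- move=> x /setDP[xG]; rewrite inE xG /= -ltnNge => lt_xV.
  apply/eqP/cards1P; exists x^-1; apply/setP => y; rewrite !inE adjE.
  apply/idP/eqP => [/andP[_ /andP[_ /eqP //]] | ->].
  rewrite groupV xG invgK (ltnW lt_xV) eqxx /= andbT.
  by apply/eqP => xV; rewrite -xV ltnn in lt_xV.
Qed.

Lemma squares_sub_group (gT : finGroupType) (G : {group gT}) :
  squares G \subset G.
Proof. by apply/subsetP => _ /imsetP[x xG ->]; rewrite groupX. Qed.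

Section NormalSubgroup.
Variables (gT : finGroupType) (G H : {group gT}).
Hypothesis nsHG : H <| G.

Let normG x : x \in G -> x \in 'N(H).
Proof. exact/subsetP/normal_norm. Qed.

Lemma mem_mul_normal u v :
  u \in G -> v \in G -> (u * v \in H) = (coset H u == (coset H v)^-1).
Proof.
move=> uG vG; rewrite eq_mulgV1 invgK -morphM ?normG //.
apply/idP/eqP; first exact: coset_id.
by apply: coset_idr; rewrite groupM ?normG.
Qed.

Lemma ess_adj_coset u v :
  u \in G -> v \in G -> coset H u = (coset H v)^-1 ->
  coset H u != coset H v -> ess_adj H u v.
Proof.
move=> uG vG uvV neq_uv; rewrite /ess_adj mem_mul_normal // uvV eqxx andbT.
by apply: contraNneq neq_uv => ->.
Qed.

Lemma ess_adj_cosetV u v :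
  u \in G -> v \in G -> ess_adj H u v -> coset H u = (coset H v)^-1.
Proof. by move=> uG vG /andP[_]; rewrite mem_mul_normal // => /eqP. Qed.

Lemma perfect_code_avoids_coset C x c :
  H :!=: 1 -> ess_perfect_code G H C -> x \in G ->
  coset H x != (coset H x)^-1 -> c \in C -> coset H c != coset H x.
Proof.
move=> ntH codeC xG Xn1 cC; apply/eqP => cX.
have [sCG indC _] := codeC; have cG := subsetP sCG c cC.
have [h hH ntrh] := trivgPn _ ntH.
have hG := subsetP (normal_sub nsHG) h hH.
have xVG : x^-1 \in G by rewrite groupV.
have xV_adj y : y \in G -> coset H y = coset H x -> ess_adj H x^-1 y.
  move=> yG yX; apply: ess_adj_coset; rewrite ?morphV ?normG ?yX //.
  by rewrite eq_sym.
have xVC : x^-1 \notin C.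
  by apply/negP => xVC; case/negP: (indC _ _ xVC cC); apply: xV_adj.
have chG : c * h \in G by rewrite groupM.
have chX : coset H (c * h) = coset H x.
  by rewrite morphM ?normG //= (coset_id hH) mulg1.
have chC : c * h \notin C.
  apply/negP => chC; case/eqP: ntrh; apply: (mulgI c); rewrite mulg1.
  by apply: (perfect_code_nbr_uniq codeC xVG xVC chC cC); apply: xV_adj.
have [y yC ch_y] := perfect_code_nbr codeC chG chC.
have yG := subsetP sCG y yC.
have yXV : coset H y = (coset H x)^-1.
  by rewrite -chX (ess_adj_cosetV chG yG ch_y) invgK.
case/negP: (indC _ _ cC yC); apply: ess_adj_coset; rewrite ?cX ?yXV ?invgK //.
Qed.

Lemma perfect_code_squares C :
  H :!=: 1 -> ess_perfect_code G H C -> squares G \subset H.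
Proof.
move=> ntH codeC; apply/subsetP => _ /imsetP[x xG ->].
rewrite expg2 mem_mul_normal //; apply: contraT => Xn1.
have [sCG _ _] := codeC.
have xVG : x^-1 \in G by rewrite groupV.
have XV : coset H x^-1 = (coset H x)^-1 by rewrite morphV ?normG.
have xC : x \notin C.
  by apply/negP => xC; case/eqP: (perfect_code_avoids_coset ntH codeC xG Xn1 xC).
have [y yC xy] := perfect_code_nbr codeC xG xC.
have yG := subsetP sCG y yC.
have XVn1 : coset H x^-1 != (coset H x^-1)^-1 by rewrite XV invgK eq_sym.
case/negP: (perfect_code_avoids_coset ntH codeC xVG XVn1 yC).
by rewrite XV (ess_adj_cosetV xG yG xy) invgK.
Qed.

Lemma mem_mul_squares u v : squares G \subset H ->
  u \in G -> v \in G -> (u * v \in H) = (coset H u == coset H v).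
Proof.
move=> sqH uG vG; have := subsetP sqH _ (imset_f _ vG).
by rewrite expg2 !mem_mul_normal // => /eqP vV; rewrite -vV.
Qed.

Lemma repr_coset_mem x : x \in G -> repr (coset H x) \in G.
Proof.
move=> xG; have := mem_repr_coset (coset H x); rewrite val_coset ?normG //.
case/rcosetP => h hH ->; rewrite groupM //.
exact: subsetP (normal_sub nsHG) h hH.
Qed.

Lemma squares_perfect_code : squares G \subset H ->
  ess_perfect_code G H [set repr (coset H x) | x in G].
Proof.
move=> sqH.
have adjE u v : u \in G -> v \in G ->
    ess_adj H u v = (u != v) && (coset H u == coset H v).
  by move=> uG vG; rewrite /ess_adj mem_mul_squares.
split.
- by apply/subsetP => _ /imsetP[x xG ->]; apply: repr_coset_mem.
- move=> _ _ /imsetP[x xG ->] /imsetP[y yG ->].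
  rewrite adjE ?repr_coset_mem // !coset_reprK.
  by apply/negP => /andP[/eqP neq /eqP XY]; apply: neq; rewrite XY.
- move=> x /setDP[xG xC]; apply/eqP/cards1P; exists (repr (coset H x)).
  apply/setP => y; rewrite !inE; apply/andP/eqP => [[/imsetP[z zG ->]] | ->].
    by rewrite adjE ?repr_coset_mem // coset_reprK => /andP[_ /eqP <-].
  split; first exact: imset_f.
  rewrite adjE ?repr_coset_mem // coset_reprK eqxx andbT.
  by apply: contraNneq xC => ->; apply: imset_f.
Qed.

End NormalSubgroup.

Theorem theorem6p1 (gT : finGroupType) (G H : {group gT}) :
  H <| G ->
  (exists C : {set gT}, ess_perfect_code G H C) <->
  ((H :==: 1) || (H :==: G) \/ squares G \subset H).
Proof.
move=> nsHG; split=> [[C codeC] | ].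
  have [H1 | ntH] := boolP (H :==: 1); first by left; apply/orP; left.
  by right; apply: perfect_code_squares codeC.
case=> [/orP[/eqP H1 | /eqP HG] | sqH].
- by eexists; rewrite H1; apply: trivial_perfect_code.
- by eexists; apply: squares_perfect_code; rewrite // HG squares_sub_group.
- by eexists; apply: squares_perfect_code.
Qed.
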